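(* There exists a polynomial-time computable function $f$ that maps every IPDL-formula to a variable-free IPDL-formula such that, for every IPDL-formula $\varphi$, $\varphi\in\mathbf{IPDL}$ if, and only if, $f(\varphi)\in\mathbf{IPDL}$ (i.e., $\mathbf{IPDL}$ embeds into its variable-free fragment in polynomial time).
   Context: Fix a countable set $\mathit{Var}=\{p_1,p_2,\ldots\}$ of propositional variables and a countable set $AP=\{a_1,a_2,\ldots\}$ of atomic program terms. IPDL formulas and program terms are defined simultaneously by $\varphi ::= p \mid \bot \mid (\varphi\rightarrow\varphi)\mid [\alpha]\varphi$ and $\alpha ::= a \mid \varphi? \mid (\alpha;\alpha)\mid(\alpha\cup\alpha)\mid(\alpha\cap\alpha)\mid \alpha^*$ ($p\in\mathit{Var}$, $a\in AP$). A Kripke model is $\mathfrak{M}=(S,\{R_a\}_{a\in AP},V)$, $S\neq\varnothing$, $R_a\subseteq S\times S$, $V:\mathit{Var}\to2^S$; $(s,t)\in R_{\psi?}$ iff $s=t$ and $\mathfrak{M},s\models\psi$; $R_{\alpha;\beta}$ is relational composition; $R_{\alpha\cup\beta}=R_\alpha\cup R_\beta$; $R_{\alpha\cap\beta}=R_\alpha\cap R_\beta$; $R_{\alpha^*}$ is the reflexive transitive closure of $R_\alpha$; $\mathfrak{M},s\models p$ iff $s\in V(p)$; $\bot$ is never true; $\rightarrow$ is classical; $\mathfrak{M},s\models[\alpha]\psi$ iff $\psi$ holds at all $R_\alpha$-successors of $s$. A formula is valid if it is true at every state of every model; $\mathbf{IPDL}$ is the set of valid IPDL-formulas. A formula is variable-free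 if it contains no propositional variables; the variable-free fragment of $\mathbf{IPDL}$ is the set of variable-free formulas in $\mathbf{IPDL}$. *)

From Stdlib Require Import Arith NArith List Relations.
Import ListNotations.

Inductive form : Type :=
| var  : nat -> form
| bot  : form
| imp  : form -> form -> form
| box  : prog -> form -> form
with prog : Type :=
| atom  : nat -> prog
| test  : form -> prog
| pseq  : prog -> prog -> prog
| punion : prog -> prog -> prog
| pcap  : prog -> prog -> prog
| pstar : prog -> prog.

Record model : Type := Model {
  St : Type;
  St_inhabited : inhabited St;
  Rel : nat -> St -> St -> Prop;
  Val : nat -> St -> Prop }.

Fixpoint sat (M : model) (phi : form) (s : St M) {struct phi} : Prop :=
  match phi with
  | var p => Val M p s
  | bot => False
  | imp a b => sat M a s -> sat M b s
  | box al b => forall t, rel M al s t -> sat M b t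
  end
with rel (M : model) (al : prog) (s t : St M) {struct al} : Prop :=
  match al with
  | atom a => Rel M a s t
  | test psi => s = t /\ sat M psi s
  | pseq a b => exists u, rel M a s u /\ rel M b u t
  | punion a b => rel M a s t \/ rel M b s t
  | pcap a b => rel M a s t /\ rel M b s t
  | pstar a => clos_refl_trans (St M) (rel M a) s t
  end.

Definition valid (phi : form) : Prop := forall (M : model) (s : St M), sat M phi s.

Definition IPDL : form -> Prop := valid.

Fixpoint var_free (phi : form) : Prop :=
  match phi with
  | var _ => False
  | bot => True
  | imp a b => var_free a /\ var_free b
  | box al b => var_free_prog al /\ var_free b
  end
with var_free_prog (al : prog) : Prop :=
  match al with
  | atom _ => True
  | test psi => var_free psi
  | pseq a b | punion a b | pcap a b => var_free_prog a /\ var_free_prog b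
  | pstar a => var_free_prog a
  end.

(* Symbols (nat, 0 = blank):
   1 var, 2 bot, 3 imp, 4 box, 5 atom, 6 test, 7 seq, 8 union, 9 cap,
   10 star, 11 bit 0, 12 bit 1, 13 end-of-number.  Polish prefix notation,
   indices written in binary (least significant bit first). *)
Fixpoint bin_pos (p : positive) : list nat :=
  match p with
  | xH => [12]
  | xO q => 11 :: bin_pos q
  | xI q => 12 :: bin_pos q
  end.

Definition enc_nat (n : nat) : list nat :=
  match N.of_nat n with
  | N0 => [13]
  | Npos p => bin_pos p ++ [13]
  end.

Fixpoint enc_form (phi : form) : list nat :=
  match phi with
  | var p => 1 :: enc_nat p
  | bot => [2]
  | imp a b => 3 :: enc_form a ++ enc_form b
  | box al b => 4 :: enc_prog al ++ enc_form b
  end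
with enc_prog (al : prog) : list nat :=
  match al with
  | atom a => 5 :: enc_nat a
  | test psi => 6 :: enc_form psi
  | pseq a b => 7 :: enc_prog a ++ enc_prog b
  | punion a b => 8 :: enc_prog a ++ enc_prog b
  | pcap a b => 9 :: enc_prog a ++ enc_prog b
  | pstar a => 10 :: enc_prog a
  end.

Inductive dir : Type := Lft | Rgt | Stay.

Record TM : Type := mkTM {
  nstates : nat;             (* states 0 .. nstates-1, start state 0 *)
  nsyms : nat;               (* tape symbols 0 .. nsyms-1, 0 = blank *)
  delta : nat -> nat -> option (nat * nat * dir) (* None = halt *) }.

Definition TM_wf (M : TM) : Prop :=
  14 <= nsyms M /\ 0 < nstates M /\
  (forall q a, (nstates M <= q \/ nsyms M <= a) -> delta M q a = None) /\
  (forall q a q' b d, delta M q a = Some (q', b, d) -> q' < nstates M /\ b < nsyms M).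

(* configuration: state, cells left of head (nearest first), head cell,
   cells right of head (nearest first) *)
Record config : Type := Cfg { cstate : nat; cleft : list nat; chead : nat; cright : list nat }.

Definition step (M : TM) (c : config) : option config :=
  match delta M (cstate c) (chead c) with
  | None => None
  | Some (q', b, d) =>
      Some match d with
      | Stay => Cfg q' (cleft c) b (cright c)
      | Lft => match cleft c with
               | [] => Cfg q' [] 0 (b :: cright c)
               | x :: l => Cfg q' l x (b :: cright c)
               end
      | Rgt => match cright c with
               | [] => Cfg q' (b :: cleft c) 0 []
               | x :: r => Cfg q' (b :: cleft c) x r
               end
      end
  end.

Definition init (w : list nat) : config :=
  match w with
  | [] => Cfg 0 [] 0 []
  | x :: r => Cfg 0 [] x r
  end.

Fixpoint run (M : TM) (n : nat) (c : config) : option config :=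
  match n with
  | 0 => Some c
  | S k => match step M c with None => None | Some c' => run M k c' end
  end.

Fixpoint take_nonblank (l : list nat) : list nat :=
  match l with
  | [] => []
  | 0 :: _ => []
  | x :: r => x :: take_nonblank r
  end.

Definition output (c : config) : list nat := take_nonblank (chead c :: cright c).

Definition halts_with (M : TM) (w : list nat) (t : nat) (u : list nat) : Prop :=
  exists n c, n <= t /\ run M n (init w) = Some c /\ step M c = None /\ output c = u.

Definition polytime_form_fun (f : form -> form) : Prop :=
  exists (M : TM) (k d : nat), TM_wf M /\
    forall phi : form,
      halts_with M (enc_form phi) (d * length (enc_form phi) ^ k + d) (enc_form (f phi)).

From Stdlib Require Import Arith NArith List Relations Lia Classical.
Import ListNotations.

(* Atomic programs a_k are renamed to the odd atoms a_(2k+1), and a variable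
   p_i becomes the variable-free formula [(a_(4i+2) ∩ ⊤?)]⊥, "there is no
   a_(4i+2)-loop here". Any model of the translation induces a model of the
   original formula by reading p_i off these loops; conversely any valuation is
   realised by putting an a_(4i+2)-loop exactly where p_i fails.
   On the binary Polish encoding the translation is computed symbol by symbol
   by a finite tr_machine with two modes (inside a variable index or not), and
   a single-tape machine simulates the tr_machine in quadratic time by carrying
   each input symbol to the right end of the tape. *)

(** * The translation and its semantics *)

Definition top : form := imp bot bot.

Definition no_loop (a : nat) : form := box (pcap (atom a) (test top)) bot.

Fixpoint tr_form (phi : form) : form :=
  match phi with
  | var i => no_loop (4 * i + 2)
  | bot => bot
  | imp a b => imp (tr_form a) (tr_form b)
  | box al b => box (tr_prog al) (tr_form b)
  end
with tr_prog (al : prog) : prog :=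
  match al with
  | atom a => atom (2 * a + 1)
  | test psi => test (tr_form psi)
  | pseq a b => pseq (tr_prog a) (tr_prog b)
  | punion a b => punion (tr_prog a) (tr_prog b)
  | pcap a b => pcap (tr_prog a) (tr_prog b)
  | pstar a => pstar (tr_prog a)
  end.

Scheme form_ind' := Induction for form Sort Prop
  with prog_ind' := Induction for prog Sort Prop.
Combined Scheme form_prog_ind from form_ind', prog_ind'.

Lemma tr_var_free :
  (forall phi, var_free (tr_form phi)) /\ (forall al, var_free_prog (tr_prog al)).
Proof. apply form_prog_ind; simpl; intuition. Qed.

Lemma clos_refl_trans_mono (A : Type) (R1 R2 : relation A) :
  inclusion A R1 R2 -> inclusion A (clos_refl_trans A R1) (clos_refl_trans A R2).
Proof.
  intros H12 s t Hst; induction Hst.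
  - apply rt_step, H12; assumption.
  - apply rt_refl.
  - eapply rt_trans; eassumption.
Qed.

Section Simulation.

Variables (N : model) (R : nat -> St N -> St N -> Prop) (V : nat -> St N -> Prop).
Hypothesis Rel_odd : forall a s t, R a s t <-> Rel N (2 * a + 1) s t.
Hypothesis Val_no_loop : forall i s, V i s <-> sat N (no_loop (4 * i + 2)) s.

Let M := Model (St N) (St_inhabited N) R V.

Lemma sat_tr :
  (forall phi s, sat M phi s <-> sat N (tr_form phi) s) /\
  (forall al s t, rel M al s t <-> rel N (tr_prog al) s t).
Proof.
  apply form_prog_ind; intros; simpl.
  - apply Val_no_loop.
  - tauto.
  - specialize (H s); specialize (H0 s); tauto.
  - split; intros Hb t Ht; apply H0, Hb, H, Ht.
  - apply Rel_odd.
  - specialize (H s); tauto.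
  - split; intros [u [H1 H2]]; exists u; split; (apply H || apply H0); assumption.
  - specialize (H s t); specialize (H0 s t); tauto.
  - specialize (H s t); specialize (H0 s t); tauto.
  - split; apply clos_refl_trans_mono; intros u v; apply H.
Qed.

End Simulation.

Lemma valid_tr_form phi : valid phi -> valid (tr_form phi).
Proof.
  intros Hphi N s.
  apply (sat_tr N (fun a => Rel N (2 * a + 1)) (fun i => sat N (no_loop (4 * i + 2))));
    [reflexivity | reflexivity | apply Hphi].
Qed.

Definition loop_model (M : model) : model :=
  Model (St M) (St_inhabited M)
    (fun n s t => (exists a, n = 2 * a + 1 /\ Rel M a s t) \/
                  (exists i, n = 4 * i + 2 /\ s = t /\ ~ Val M i s))
    (fun _ _ => False).

Lemma loop_model_odd M a s t : Rel (loop_model M) (2 * a + 1) s t <-> Rel M a s t.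
Proof.
  simpl; split.
  - intros [[a' [E H]] | [i [E _]]]; [replace a with a' by lia; exact H | lia].
  - intros H; left; exists a; split; [reflexivity | exact H].
Qed.

Lemma loop_model_no_loop M i s : sat (loop_model M) (no_loop (4 * i + 2)) s <-> Val M i s.
Proof.
  simpl; split.
  - intros Hnl; apply NNPP; intros Hn.
    apply (Hnl s); split; [right; exists i; auto | split; auto].
  - intros Hv t [[[a [E _]] | [i' [E [<- Hn]]]] _]; [lia |].
    replace i' with i in Hn by lia; exact (Hn Hv).
Qed.

Lemma valid_tr_form_inv phi : valid (tr_form phi) -> valid phi.
Proof.
  intros Htr [S inh R V] s.
  apply (sat_tr (loop_model (Model S inh R V)) R V).
  - intros; symmetry; apply loop_model_odd.
  - intros; symmetry; apply loop_model_no_loop.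
  - apply Htr.
Qed.

(** * The translation on encodings *)

Lemma enc_nat_odd a : enc_nat (2 * a + 1) = 12 :: enc_nat a.
Proof.
  unfold enc_nat; rewrite Nat2N.inj_add, Nat2N.inj_mul.
  destruct (N.of_nat a); reflexivity.
Qed.

Lemma enc_nat_4n2 i : enc_nat (4 * i + 2) = 11 :: 12 :: enc_nat i.
Proof.
  unfold enc_nat; rewrite Nat2N.inj_add, Nat2N.inj_mul.
  destruct (N.of_nat i); reflexivity.
Qed.

Definition is_digit (d : nat) : Prop := d = 11 \/ d = 12.

Lemma bin_pos_digits p : Forall is_digit (bin_pos p).
Proof. induction p; simpl; constructor; unfold is_digit; auto. Qed.

Lemma enc_nat_digits n : exists ds, enc_nat n = ds ++ [13] /\ Forall is_digit ds.
Proof.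
  unfold enc_nat; destruct (N.of_nat n) as [|p].
  - exists []; auto.
  - exists (bin_pos p); auto using bin_pos_digits.
Qed.

(* The mode is [true] exactly while reading the digits of a variable index.
   The prefixes [11;12] and [12] turn those digits into the codes of [4i+2]
   and [2a+1]; after the end marker [13] come [test top] and the body [bot]
   of [no_loop]. *)
Definition emit (m : bool) (x : nat) : list nat :=
  match m, x with
  | false, 1 => [4; 9; 5; 11; 12]
  | false, 5 => [5; 12]
  | true, 13 => [13; 6; 3; 2; 2; 2]
  | _, _ => [x]
  end.

Definition next_mode (m : bool) (x : nat) : bool :=
  match m, x with
  | false, 1 => true
  | true, 13 => false
  | _, _ => m
  end.

Fixpoint transduce (m : bool) (w : list nat) : list nat :=
  match w with
  | [] => []
  | x :: r => emit m x ++ transduce (next_mode m x) r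
  end.

Lemma transduce_digits m ds r :
  Forall is_digit ds -> transduce m (ds ++ r) = ds ++ transduce m r.
Proof.
  induction 1 as [|d ds Hd _ IH]; [reflexivity |].
  destruct Hd; subst; destruct m; simpl; rewrite IH; reflexivity.
Qed.

Lemma transduce_enc :
  (forall phi r, transduce false (enc_form phi ++ r) =
                 enc_form (tr_form phi) ++ transduce false r) /\
  (forall al r, transduce false (enc_prog al ++ r) =
                enc_prog (tr_prog al) ++ transduce false r).
Proof.
  apply form_prog_ind; intros; cbn [enc_form enc_prog tr_form tr_prog no_loop top];
    try rewrite enc_nat_4n2; try rewrite enc_nat_odd;
    simpl; repeat rewrite <- app_assoc; try reflexivity;
    try (rewrite H; try rewrite H0; reflexivity).
  all: destruct (enc_nat_digits n) as [ds [-> Hds]];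
    rewrite <- app_assoc, transduce_digits by exact Hds;
    simpl; repeat rewrite <- app_assoc; reflexivity.
Qed.

Definition is_sym (a : nat) : Prop := 1 <= a <= 13.

Lemma enc_sym :
  (forall phi, Forall is_sym (enc_form phi)) /\ (forall al, Forall is_sym (enc_prog al)).
Proof.
  assert (Hnat : forall n, Forall is_sym (enc_nat n)).
  { intros n; destruct (enc_nat_digits n) as [ds [-> Hds]].
    apply Forall_app; split.
    - eapply Forall_impl; [| exact Hds]; intros a [-> | ->]; unfold is_sym; lia.
    - repeat constructor; unfold is_sym; lia. }
  apply form_prog_ind; intros; simpl;
    repeat constructor; try (unfold is_sym; lia); try apply Forall_app; auto.
Qed.

Lemma emit_length m x : 1 <= length (emit m x) <= 6.
Proof. destruct m; do 14 (destruct x as [|x]; [simpl; lia |]); simpl; lia. Qed.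

Lemma emit_sym m x : is_sym x -> Forall is_sym (emit m x).
Proof.
  unfold is_sym; intros Hx.
  destruct m; do 14 (destruct x as [|x]; [simpl; repeat constructor; lia |]); lia.
Qed.

Lemma transduce_sym m u : Forall is_sym u -> Forall is_sym (transduce m u).
Proof.
  intros Hu; revert m; induction Hu; intros m; simpl; [constructor |].
  apply Forall_app; auto using emit_sym.
Qed.

(** * Turing machines *)

Definition head_sym (t : list nat) : nat := match t with [] => 0 | x :: _ => x end.

Definition cfg_at (q : nat) (L t : list nat) : config :=
  match t with [] => Cfg q L 0 [] | x :: r => Cfg q L x r end.

(* The head has just moved left off [t] onto the nearest cell of [L]. *)
Definition cfg_left (q : nat) (L t : list nat) : config :=
  match L with [] => Cfg q [] 0 t | x :: L' => cfg_at q L' (x :: t) end.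

Section Runs.

Variable M : TM.

Lemma step_right q L t q' b :
  delta M q (head_sym t) = Some (q', b, Rgt) ->
  step M (cfg_at q L t) = Some (cfg_at q' (b :: L) (tl t)).
Proof. intros H; destruct t as [|x [|y r]]; unfold step; simpl in *; rewrite H; reflexivity. Qed.

Lemma step_left q L t q' b :
  delta M q (head_sym t) = Some (q', b, Lft) ->
  step M (cfg_at q L t) = Some (cfg_left q' L (b :: tl t)).
Proof. intros H; destruct L, t; unfold step; simpl in *; rewrite H; reflexivity. Qed.

Lemma run_one c c' : step M c = Some c' -> run M 1 c = Some c'.
Proof. intros H; simpl; rewrite H; reflexivity. Qed.

Lemma run_add a b c c' : run M a c = Some c' -> run M (a + b) c = run M b c'.
Proof.
  revert c; induction a as [|a IH]; intros c H; simpl in *.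
  - injection H as ->; reflexivity.
  - destruct (step M c); [apply IH, H | discriminate].
Qed.

Lemma run_trans a b c c1 c2 :
  run M a c = Some c1 -> run M b c1 = Some c2 -> run M (a + b) c = Some c2.
Proof. intros H1 H2; rewrite (run_add a b c c1 H1); exact H2. Qed.

Lemma run_scan_right q l L r :
  (forall a, In a l -> delta M q a = Some (q, a, Rgt)) ->
  run M (length l) (cfg_at q L (l ++ r)) = Some (cfg_at q (rev l ++ L) r).
Proof.
  revert L; induction l as [|a l IH]; intros L H; [reflexivity |].
  apply (run_trans 1 (length l)) with (cfg_at q (a :: L) (l ++ r)).
  - apply run_one, step_right, H; left; reflexivity.
  - rewrite IH by (intros; apply H; right; assumption).
    simpl; rewrite <- app_assoc; reflexivity.
Qed.

Lemma run_scan_left q l L t :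
  (forall a, In a l -> delta M q a = Some (q, a, Lft)) ->
  run M (length l) (cfg_left q (l ++ L) t) = Some (cfg_left q L (rev l ++ t)).
Proof.
  revert t; induction l as [|a l IH]; intros t H; [reflexivity |].
  apply (run_trans 1 (length l)) with (cfg_left q (l ++ L) (a :: t)).
  - apply run_one, step_left, H; left; reflexivity.
  - rewrite IH by (intros; apply H; right; assumption).
    simpl; rewrite <- app_assoc; reflexivity.
Qed.

End Runs.

Local Open Scope bool_scope.

(* Tape symbols beyond the input alphabet: 14 separates the input from the
   output, 15 overwrites input symbols already processed. In a round, a
   [select_state] replaces the next input symbol [x] by 15, a [write_state]
   carries [x] (and the offset [k] into [emit m x]) to the right end and
   appends [emit m x], and a [back_state] returns to the last 15. The
   2 * 14 * 6 write states follow the six others: 174 states in all. *)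
Definition back_state (m : bool) : nat := if m then 2 else 1.
Definition select_state (m : bool) : nat := if m then 4 else 3.
Definition halt_state : nat := 5.
Definition write_code (m : bool) (x k : nat) : nat := (if m then 84 else 0) + 6 * x + k.
Definition write_state (m : bool) (x k : nat) : nat := 6 + write_code m x k.
Definition decode_write (r : nat) : bool * nat * nat := (84 <=? r, (r mod 84) / 6, r mod 6).

Definition delta_write (r a : nat) : option (nat * nat * dir) :=
  let '(m, x, k) := decode_write r in
  if a =? 0 then
    let p := emit m x in
    if k + 1 <? length p then Some (write_state m x (k + 1), nth k p 0, Rgt)
    else Some (back_state (next_mode m x), nth k p 0, Lft)
  else Some (6 + r, a, Rgt).

Definition delta_select (m : bool) (a : nat) : option (nat * nat * dir) :=
  if a =? 14 then Some (halt_state, a, Rgt)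
  else if (1 <=? a) && (a <=? 13) then Some (write_state m a 0, 15, Rgt)
  else None.

Definition delta_back (m : bool) (a : nat) : option (nat * nat * dir) :=
  if (a =? 0) || (a =? 15) then Some (select_state m, a, Rgt)
  else Some (back_state m, a, Lft).

Definition delta_main (q a : nat) : option (nat * nat * dir) :=
  match q with
  | 0 => if a =? 0 then Some (back_state false, 14, Lft) else Some (0, a, Rgt)
  | 1 => delta_back false a
  | 2 => delta_back true a
  | 3 => delta_select false a
  | 4 => delta_select true a
  | 5 => None
  | S (S (S (S (S (S r))))) => delta_write r a
  end.

Definition tr_machine_delta (q a : nat) : option (nat * nat * dir) :=
  if (q <? 174) && (a <? 16) then delta_main q a else None.

Definition tr_machine : TM := mkTM 174 16 tr_machine_delta.

Definition tr_machine_delta_in_range : bool :=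
  forallb (fun q => forallb (fun a =>
    match tr_machine_delta q a with
    | None => true
    | Some (q', b, _) => (q' <? 174) && (b <? 16)
    end) (seq 0 16)) (seq 0 174).

Lemma tr_machine_delta_in_range_true : tr_machine_delta_in_range = true.
Proof. vm_compute; reflexivity. Qed.

Lemma tr_machine_wf : TM_wf tr_machine.
Proof.
  unfold TM_wf; simpl; split; [lia |]; split; [lia |]; split.
  - intros q a Hout; unfold tr_machine_delta.
    destruct (Nat.ltb_spec q 174), (Nat.ltb_spec a 16); try reflexivity; lia.
  - intros q a q' b d Hd.
    assert (Hqa : q < 174 /\ a < 16).
    { unfold tr_machine_delta in Hd.
      destruct (Nat.ltb_spec q 174), (Nat.ltb_spec a 16); simpl in Hd;
        [split; assumption | discriminate ..]. }
    pose proof tr_machine_delta_in_range_true as Hall.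
    unfold tr_machine_delta_in_range in Hall; rewrite forallb_forall in Hall.
    specialize (Hall q (proj2 (in_seq 174 0 q) ltac:(lia))); rewrite forallb_forall in Hall.
    specialize (Hall a (proj2 (in_seq 16 0 a) ltac:(lia))); rewrite Hd in Hall.
    apply andb_prop in Hall as [Hq' Hb]; apply Nat.ltb_lt in Hq', Hb; auto.
Qed.

Lemma decode_write_code m x k : x < 14 -> k < 6 -> decode_write (write_code m x k) = (m, x, k).
Proof.
  intros Hx Hk; destruct m;
    do 14 (destruct x as [|x]; [do 6 (destruct k as [|k]; [reflexivity |]); lia |]); lia.
Qed.

Lemma tr_machine_delta_write m x k a : x < 14 -> k < 6 ->
  tr_machine_delta (write_state m x k) a =
  if a <? 16 then delta_write (write_code m x k) a else None.
Proof.
  intros Hx Hk; unfold tr_machine_delta.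
  replace (write_state m x k <? 174) with true
    by (symmetry; apply Nat.ltb_lt; unfold write_state, write_code; destruct m; lia).
  reflexivity.
Qed.

Lemma delta_scan_input a : is_sym a -> tr_machine_delta 0 a = Some (0, a, Rgt).
Proof. unfold is_sym; intros Ha; do 14 (destruct a as [|a]; [try reflexivity; lia |]); lia. Qed.

Lemma delta_back_sym m a : 1 <= a <= 14 -> tr_machine_delta (back_state m) a = Some (back_state m, a, Lft).
Proof. intros Ha; destruct m; do 15 (destruct a as [|a]; [try reflexivity; lia |]); lia. Qed.

Lemma delta_select_sym m a : is_sym a -> tr_machine_delta (select_state m) a = Some (write_state m a 0, 15, Rgt).
Proof. unfold is_sym; intros Ha; destruct m; do 14 (destruct a as [|a]; [try reflexivity; lia |]); lia. Qed.

Lemma delta_write_carry m x k a : x < 14 -> k < 6 -> 1 <= a <= 15 ->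
  tr_machine_delta (write_state m x k) a = Some (write_state m x k, a, Rgt).
Proof.
  intros Hx Hk Ha; rewrite tr_machine_delta_write by assumption.
  replace (a <? 16) with true by (symmetry; apply Nat.ltb_lt; lia).
  unfold delta_write; rewrite decode_write_code by assumption.
  replace (a =? 0) with false by (symmetry; apply Nat.eqb_neq; lia); reflexivity.
Qed.

Lemma delta_write_blank m x k : x < 14 -> k < 6 ->
  tr_machine_delta (write_state m x k) 0 =
  if k + 1 <? length (emit m x) then Some (write_state m x (k + 1), nth k (emit m x) 0, Rgt)
  else Some (back_state (next_mode m x), nth k (emit m x) 0, Lft).
Proof.
  intros Hx Hk; rewrite tr_machine_delta_write by assumption.
  unfold delta_write; rewrite decode_write_code by assumption; reflexivity.
Qed.

Lemma skipn_succ_inv (k : nat) (p : list nat) a r : skipn k p = a :: r ->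
  skipn (S k) p = r /\ nth k p 0 = a /\ length p = k + S (length r).
Proof.
  revert p; induction k as [|k IH]; intros [|b p] H; simpl in *; try discriminate.
  - injection H as -> ->; auto.
  - destruct (IH p H) as [H1 [H2 H3]]; auto.
Qed.

Lemma run_write m x k s y L : is_sym x -> skipn k (emit m x) = s ++ [y] ->
  run tr_machine (S (length s)) (cfg_at (write_state m x k) L []) =
  Some (cfg_left (back_state (next_mode m x)) (rev s ++ L) [y]).
Proof.
  intros Hx; pose proof (emit_length m x); unfold is_sym in Hx.
  revert k L; induction s as [|a s IH]; intros k L Hs.
  - destruct (skipn_succ_inv k _ _ _ Hs) as [_ [Hnth Hlen]]; simpl in Hlen.
    apply run_one, step_left; simpl head_sym.
    rewrite delta_write_blank by lia.
    replace (k + 1 <? length (emit m x)) with false by (symmetry; apply Nat.ltb_ge; lia).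
    rewrite Hnth; reflexivity.
  - destruct (skipn_succ_inv k _ _ _ Hs) as [Hs' [Hnth Hlen]].
    rewrite length_app in Hlen; simpl in Hlen.
    apply (run_trans _ 1 (S (length s))) with (cfg_at (write_state m x (S k)) (a :: L) []).
    + apply run_one, step_right; simpl head_sym.
      rewrite delta_write_blank by lia.
      replace (k + 1 <? length (emit m x)) with true by (symmetry; apply Nat.ltb_lt; lia).
      rewrite Hnth, Nat.add_1_r; reflexivity.
    + rewrite (IH (S k) _ Hs'); simpl; rewrite <- app_assoc; reflexivity.
Qed.

Lemma run_carry m x l J : is_sym x -> (forall a, In a l -> 1 <= a <= 14) ->
  run tr_machine (1 + length l) (cfg_at (select_state m) J (x :: l)) =
  Some (cfg_at (write_state m x 0) (rev l ++ 15 :: J) []).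
Proof.
  intros Hx Hl; unfold is_sym in Hx.
  apply run_trans with (cfg_at (write_state m x 0) (15 :: J) l).
  - apply run_one, step_right, delta_select_sym; assumption.
  - pose proof (run_scan_right tr_machine (write_state m x 0) l (15 :: J) []) as Hscan.
    rewrite app_nil_r in Hscan; apply Hscan.
    intros a Ha; apply delta_write_carry; [lia | lia | specialize (Hl a Ha); lia].
Qed.

Lemma run_return m l J t : (forall a, In a l -> 1 <= a <= 14) ->
  run tr_machine (length l + 1) (cfg_left (back_state m) (l ++ 15 :: J) t) =
  Some (cfg_at (select_state m) (15 :: J) (rev l ++ t)).
Proof.
  intros Hl; apply run_trans with (cfg_left (back_state m) (15 :: J) (rev l ++ t)).
  - apply run_scan_left; intros a Ha; apply delta_back_sym, Hl, Ha.
  - apply run_one.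
    change (cfg_left (back_state m) (15 :: J) (rev l ++ t))
      with (cfg_at (back_state m) J (15 :: rev l ++ t)).
    apply step_right; destruct m; reflexivity.
Qed.

Definition round_cfg (m : bool) (j : nat) (u o : list nat) : config :=
  cfg_at (select_state m) (repeat 15 j ++ [0]) (u ++ 14 :: o).

Lemma Forall_sym_bound (l : list nat) : Forall is_sym l -> forall a, In a l -> 1 <= a <= 14.
Proof. rewrite Forall_forall; intros Hl a Ha; specialize (Hl a Ha); unfold is_sym in Hl; lia. Qed.

Lemma run_round m j x u o : is_sym x -> Forall is_sym u -> Forall is_sym o ->
  run tr_machine (3 + 2 * length u + 2 * length o + 2 * length (emit m x))
    (round_cfg m j (x :: u) o) =
  Some (round_cfg (next_mode m x) (S j) u (o ++ emit m x)).
Proof.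
  intros Hx Hu Ho.
  assert (Hemit : emit m x <> []).
  { pose proof (emit_length m x) as Hlen; intros E; rewrite E in Hlen; simpl in Hlen; lia. }
  destruct (exists_last Hemit) as [s [y Hsy]].
  set (J := repeat 15 j ++ [0]); set (l := u ++ 14 :: o).
  assert (Hl : forall a, In a l -> 1 <= a <= 14).
  { intros a Ha; apply in_app_or in Ha as [Ha | [<- | Ha]];
      [apply (Forall_sym_bound u) | lia | apply (Forall_sym_bound o)]; assumption. }
  assert (Hs : forall a, In a (rev s ++ rev l) -> 1 <= a <= 14).
  { intros a Ha; apply in_app_or in Ha as [Ha | Ha]; apply in_rev in Ha; [| apply Hl, Ha].
    apply (Forall_sym_bound (emit m x)); [apply emit_sym, Hx |].
    rewrite Hsy; apply in_or_app; left; exact Ha. }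
  replace (3 + 2 * length u + 2 * length o + 2 * length (emit m x))
    with ((1 + length l) + (S (length s) + (length (rev s ++ rev l) + 1)))
    by (rewrite Hsy; unfold l; rewrite !length_app, !length_rev, !length_app; simpl; lia).
  unfold round_cfg; simpl app at 1.
  eapply run_trans; [apply run_carry; assumption |].
  eapply run_trans; [apply run_write; [exact Hx | exact Hsy] |].
  rewrite app_assoc, run_return by exact Hs.
  rewrite rev_app_distr, !rev_involutive, Hsy; unfold l.
  simpl; repeat rewrite <- app_assoc; reflexivity.
Qed.

Lemma step_halt_state L t : step tr_machine (cfg_at halt_state L t) = None.
Proof.
  destruct t as [|x r]; unfold step; simpl; [reflexivity |].
  unfold tr_machine_delta; simpl; destruct (x <? 16); reflexivity.
Qed.

Lemma run_rounds u : forall m j o, Forall is_sym u -> Forall is_sym o ->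
  exists n L, n <= length u * (2 * length o + 14 * length u + 16) + 1 /\
    run tr_machine n (round_cfg m j u o) = Some (cfg_at halt_state L (o ++ transduce m u)).
Proof.
  induction u as [|x u IH]; intros m j o Hu Ho.
  - exists 1, (14 :: repeat 15 j ++ [0]); split; [simpl; lia |].
    apply run_one; unfold round_cfg; simpl app; rewrite app_nil_r.
    apply step_right; destruct m; reflexivity.
  - inversion Hu as [| ? ? Hx Hu']; subst.
    destruct (IH (next_mode m x) (S j) (o ++ emit m x) Hu') as [n [L [Hn Hrun]]].
    { apply Forall_app; auto using emit_sym. }
    exists ((3 + 2 * length u + 2 * length o + 2 * length (emit m x)) + n), L; split.
    + pose proof (emit_length m x); rewrite length_app in Hn; simpl length; nia.
    + eapply run_trans; [apply run_round; assumption |].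
      rewrite Hrun; simpl; rewrite app_assoc; reflexivity.
Qed.

Lemma run_setup w : Forall is_sym w ->
  run tr_machine (2 * length w + 2) (init w) = Some (round_cfg false 0 w []).
Proof.
  intros Hw.
  assert (Hinit : init w = cfg_at 0 [] w) by (destruct w; reflexivity).
  rewrite Hinit; replace (2 * length w + 2) with (length w + (1 + (length w + 1))) by lia.
  apply run_trans with (cfg_at 0 (rev w) []).
  { pose proof (run_scan_right tr_machine 0 w [] []) as Hscan.
    rewrite !app_nil_r in Hscan; apply Hscan.
    intros a Ha; apply delta_scan_input; rewrite Forall_forall in Hw; apply Hw, Ha. }
  apply run_trans with (cfg_left (back_state false) (rev w) [14]).
  { apply run_one, step_left; reflexivity. }
  apply run_trans with (cfg_left (back_state false) [] (w ++ [14])).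
  { pose proof (run_scan_left tr_machine (back_state false) (rev w) [] [14]) as Hscan.
    rewrite app_nil_r, length_rev, rev_involutive in Hscan; apply Hscan.
    intros a Ha; apply in_rev in Ha; apply delta_back_sym, (Forall_sym_bound w Hw), Ha. }
  apply run_one.
  change (cfg_left (back_state false) [] (w ++ [14])) with (cfg_at 1 [] (0 :: w ++ [14])).
  apply step_right; reflexivity.
Qed.

Lemma take_nonblank_sym l : Forall is_sym l -> take_nonblank l = l.
Proof.
  induction 1 as [|x l Hx _ IH]; [reflexivity |].
  unfold is_sym in Hx; destruct x; [lia |]; simpl; rewrite IH; reflexivity.
Qed.

Lemma tr_form_polytime : polytime_form_fun tr_form.
Proof.
  exists tr_machine, 2, 32; split; [exact tr_machine_wf |]; intros phi.
  pose proof (proj1 enc_sym phi) as Hsym; set (w := enc_form phi) in *.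
  destruct (run_rounds w false 0 [] Hsym (Forall_nil _)) as [n [L [Hn Hrun]]].
  exists (2 * length w + 2 + n), (cfg_at halt_state L (transduce false w)).
  repeat split.
  - simpl length in Hn; rewrite Nat.pow_2_r; nia.
  - eapply run_trans; [apply run_setup, Hsym | exact Hrun].
  - apply step_halt_state.
  - pose proof (proj1 transduce_enc phi []) as Henc; rewrite !app_nil_r in Henc.
    fold w in Henc; rewrite <- Henc.
    pose proof (transduce_sym false w Hsym) as Hout.
    destruct (transduce false w) as [|a r]; [reflexivity |].
    apply take_nonblank_sym, Hout.
Qed.

Theorem theorem1 :
  exists f : form -> form,
    polytime_form_fun f /\
    (forall phi : form, var_free (f phi)) /\
    (forall phi : form, IPDL phi <-> IPDL (f phi)).
Proof.
  exists tr_form; split; [exact tr_form_polytime |]; split.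
  - apply tr_var_free.
  - intros phi; split; [apply valid_tr_form | apply valid_tr_form_inv].
Qed.
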